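(* Let $\mathfrak{a}$ be a saturated ideal of ${}^b\mathbb{C}[X]={}^b\mathbb{C}[X_1,\dots,X_n]$, $A={}^b\mathbb{C}[X]/\mathfrak{a}$, and $Inf(A)$ the kernel of the standard part map $A\to A^{an}$. Then $Inf(A)^2=Inf(A)$.
   Context: ${}^*\mathbb{C}$ is an ultrapower of $\mathbb{C}$, ${}^b\mathbb{C}$ its bounded elements. ${}^b\mathbb{C}[X]$ is the ring of internal polynomials $P$ (elements of the ultrapower of $\mathbb{C}[X_1,\dots,X_n]$) with $P({}^b\mathbb{C}^n)\subset{}^b\mathbb{C}$; $\mathrm{st}:{}^b\mathbb{C}[X]\to\mathcal{O}(\mathbb{C}^n)$, $\mathrm{st}(P)(x)=$ standard part of $P(x)$ for $x\in\mathbb{C}^n$. $A^{an}:=\mathcal{O}(\mathbb{C}^n)/\overline{\mathrm{st}(\mathfrak{a})}$ (closure for the compact-open topology), and $A\to A^{an}$ is induced by $\mathrm{st}$. $\mathfrak{a}$ is saturated if $\mathrm{st}(\mathfrak{a})=\overline{\mathrm{st}(\mathfrak{a})}$. *)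

From mathcomp Require Import all_boot all_order all_algebra.
From mathcomp Require Import complex.
From mathcomp Require Import Rstruct.
From mathcomp Require Import mpoly.
From Stdlib Require Import Reals.

Set Implicit Arguments.
Unset Strict Implicit.
Unset Printing Implicit Defensive.

Import Order.TTheory GRing.Theory Num.Theory.
Local Open Scope ring_scope.

Definition RR : rcfType := Rdefinitions.R.
Definition CC := complex RR.
Definition cabs (z : CC) : RR := Normc.normc z.

Record ultrafilter (I : Type) := Ultrafilter {
  uf_mem :> (I -> Prop) -> Prop;
  uf_full : uf_mem (fun _ => True);
  uf_proper : ~ uf_mem (fun _ => False);
  uf_up : forall A B : I -> Prop, uf_mem A -> (forall i, A i -> B i) -> uf_mem B;
  uf_inter : forall A B : I -> Prop, uf_mem A -> uf_mem B -> uf_mem (fun i => A i /\ B i);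
  uf_ultra : forall A : I -> Prop, uf_mem A \/ uf_mem (fun i => ~ A i)
}.

(* Countably incomplete (hence nonprincipal) ultrafilter: the usual hypothesis
   making the ultrapower a nonstandard extension. *)
Definition countably_incomplete I (U : ultrafilter I) : Prop :=
  exists A : nat -> I -> Prop, (forall k, U (A k)) /\ (forall i, exists k, ~ A k i).

(* Elements of *C are represented by I -> CC (modulo U-a.e. equality). *)
Definition hbounded I (U : ultrafilter I) (x : I -> CC) : Prop :=
  exists r : RR, U (fun i => cabs (x i) <= r).

Definition is_st I (U : ultrafilter I) (x : I -> CC) (c : CC) : Prop :=
  forall eps : RR, 0 < eps -> U (fun i => cabs (x i - c) < eps).

(* Internal polynomials in n variables: elements of the ultrapower of
   C[X_1..X_n], represented by I -> C[X_1..X_n] (modulo U-a.e. equality). *)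
Definition ipoly (I : Type) (n : nat) : Type := I -> mpoly.mpoly n CC.
Arguments ipoly : clear implicits.

Definition ieq I (U : ultrafilter I) n (P Q : ipoly I n) : Prop :=
  U (fun i => P i = Q i).

Definition ieval I n (P : ipoly I n) (x : 'I_n -> I -> CC) : I -> CC :=
  fun i => mpoly.meval (fun j => x j i) (P i).

(* P belongs to bC[X]: P( bC^n ) is contained in bC. *)
Definition bCX I (U : ultrafilter I) n (P : ipoly I n) : Prop :=
  forall x : 'I_n -> I -> CC, (forall j, hbounded U (x j)) -> hbounded U (ieval P x).

Definition st_of I (U : ultrafilter I) n (P : ipoly I n) (f : ('I_n -> CC) -> CC) : Prop :=
  forall a : 'I_n -> CC, is_st U (fun i => mpoly.meval a (P i)) (f a).

Definition iadd I n (P Q : ipoly I n) : ipoly I n := fun i => P i + Q i.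
Definition isub I n (P Q : ipoly I n) : ipoly I n := fun i => P i - Q i.
Definition imul I n (P Q : ipoly I n) : ipoly I n := fun i => P i * Q i.
Definition izero I n : ipoly I n := fun _ => 0.
Definition isum I n m (F : 'I_m -> ipoly I n) : ipoly I n :=
  fun i => \sum_(k < m) F k i.

Definition is_ideal I (U : ultrafilter I) n (a : ipoly I n -> Prop) : Prop :=
  [/\ (forall P, a P -> bCX U P),
      (forall P Q, a P -> ieq U P Q -> a Q),
      a (@izero I n),
      (forall P Q, a P -> a Q -> a (iadd P Q)) &
      (forall P Q, bCX U P -> a Q -> a (imul P Q))].

Definition st_set I (U : ultrafilter I) n (a : ipoly I n -> Prop)
  (f : ('I_n -> CC) -> CC) : Prop :=
  exists P, a P /\ st_of U P f.

(* Closure for the compact-open topology (= topology of uniform convergence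
   on compact subsets; closed polydiscs are cofinal among compacts). *)
Definition co_closure n (S : (('I_n -> CC) -> CC) -> Prop)
  (f : ('I_n -> CC) -> CC) : Prop :=
  forall r eps : RR, 0 < eps ->
    exists g, S g /\
      forall a : 'I_n -> CC, (forall j, cabs (a j) <= r) -> cabs (f a - g a) <= eps.

Definition saturated I (U : ultrafilter I) n (a : ipoly I n -> Prop) : Prop :=
  forall f, co_closure (st_set U a) f -> st_set U a f.

(* P (in bC[X]) represents an element of Inf(A) = ker(A -> A^an):
   st(P) lies in the closure of st(a). *)
Definition Inf I (U : ultrafilter I) n (a : ipoly I n -> Prop) (P : ipoly I n) : Prop :=
  bCX U P /\ exists f, st_of U P f /\ co_closure (st_set U a) f.

(* P (in bC[X]) represents an element of Inf(A)^2 in A = bC[X]/a. *)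
Definition Inf2 I (U : ultrafilter I) n (a : ipoly I n -> Prop) (P : ipoly I n) : Prop :=
  bCX U P /\
  exists (m : nat) (Q R : 'I_m -> ipoly I n),
    (forall k, Inf U a (Q k) /\ Inf U a (R k)) /\
    a (isub P (isum (fun k => imul (Q k) (R k)))).

From Stdlib Require Import Reals Classical ClassicalEpsilon FunctionalExtensionality.
From mathcomp Require Import all_boot all_order all_algebra complex Rstruct mpoly.
From mathcomp Require Import ring lra zify.

(* If st(P) lies in the closure of st(a), saturation gives B in a with
   st(P) = st(B), so D := P - B is a bounded internal polynomial with
   st(D) = 0.  Cauchy estimates on complex lines make D S-continuous, hence
   infinitesimal uniformly on every standard polydisc; by overspill there is
   an infinite N with |D| <= 1/N^2 on the polydisc of radius N.  Then D = (1/N) (N D) with both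
   factors infinitesimal, so P = B + (1/N) (N D) lies in Inf(A)^2 modulo a.
   Conversely st is multiplicative and, again by saturation, the standard
   part of each factor of Inf(A) is the standard part of an element of a. *)

Set Implicit Arguments.
Unset Strict Implicit.
Unset Printing Implicit Defensive.

Import Order.TTheory GRing.Theory Num.Theory.
Local Open Scope complex_scope.
Local Open Scope ring_scope.

Lemma cabs_ge0 (z : CC) : 0 <= cabs z.
Proof. by case: z => a b; apply: sqrtr_ge0. Qed.

Lemma cabs_eq0 (z : CC) : cabs z = 0 -> z = 0.
Proof. exact: Normc.eq0_normc. Qed.

Lemma cabs0 : cabs 0 = 0. Proof. exact: Normc.normc0. Qed.
Lemma cabs1 : cabs 1 = 1. Proof. exact: Normc.normc1. Qed.

Lemma cabsD (x y : CC) : cabs (x + y) <= cabs x + cabs y.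
Proof. exact: le_normcD. Qed.

Lemma cabsN (x : CC) : cabs (- x) = cabs x.
Proof. exact: normcN. Qed.

Lemma cabsM (x y : CC) : cabs (x * y) = cabs x * cabs y.
Proof. exact: Normc.normcM. Qed.

Lemma cabsV (z : CC) : cabs z^-1 = (cabs z)^-1.
Proof. exact: Normc.normcV. Qed.

Lemma cabsX (x : CC) k : cabs (x ^+ k) = cabs x ^+ k.
Proof. by elim: k => [|k IH]; rewrite ?expr0 ?cabs1 // !exprS cabsM IH. Qed.

Lemma cabs_sum m (F : 'I_m -> CC) : cabs (\sum_(k < m) F k) <= \sum_(k < m) cabs (F k).
Proof.
elim: m F => [|m IH] F; first by rewrite !big_ord0 cabs0.
by rewrite !big_ord_recr /=; apply: le_trans (cabsD _ _) _; rewrite lerD2r.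
Qed.

Lemma cabs_real (r : RR) : cabs r%:C = `|r|.
Proof. by rewrite /cabs /= expr0n /= addr0 sqrtr_sqr. Qed.

Lemma cabs_nat k : cabs k%:R = k%:R.
Proof. by rewrite -(rmorph_nat (real_complex RR)) cabs_real ger0_norm. Qed.

Lemma cabs_ReIm (a b : RR) : cabs (a +i* b) <= `|a| + `|b|.
Proof.
rewrite /cabs /= -[`|a| + `|b|]ger0_norm ?addr_ge0 // -[X in _ <= X]sqrtr_sqr.
apply: ler_wsqrtr; rewrite -[a ^+ 2]real_normK ?num_real // -[b ^+ 2]real_normK ?num_real //.
have := normr_ge0 a; have := normr_ge0 b; nra.
Qed.

Lemma normr_Re_le_cabs (z : CC) : `|complex.Re z| <= cabs z.
Proof.
by case: z => a b; rewrite /cabs /= -sqrtr_sqr; apply: ler_wsqrtr; have := sqr_ge0 b; lra.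
Qed.

Lemma normr_Im_le_cabs (z : CC) : `|complex.Im z| <= cabs z.
Proof.
by case: z => a b; rewrite /cabs /= -sqrtr_sqr; apply: ler_wsqrtr; have := sqr_ge0 a; lra.
Qed.

Lemma choice_fun (A B : Type) (P : A -> B -> Prop) :
  (forall x, exists y, P x y) -> exists f : A -> B, forall x, P x (f x).
Proof.
move=> h; exists (fun x => proj1_sig (constructive_indefinite_description _ (h x))).
by move=> x; case: (constructive_indefinite_description _ (h x)).
Qed.

Section Ultrafilter.
Variables (I : Type) (U : ultrafilter I).

Lemma ultra_all (A : I -> Prop) : (forall i, A i) -> U A.
Proof. by move=> h; apply: uf_up (uf_full U) _. Qed.

Lemma ultra_and2 (A B C : I -> Prop) :
  U A -> U B -> (forall i, A i -> B i -> C i) -> U C.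
Proof. by move=> hA hB h; apply: uf_up (uf_inter hA hB) _ => i []; apply: h. Qed.

Lemma ultra_witness (A : I -> Prop) : U A -> exists i, A i.
Proof.
move=> hA; apply: NNPP => hn; apply: (@uf_proper _ U); apply: uf_up hA _ => i Ai.
by apply: hn; exists i.
Qed.

Lemma ultra_forall_fin (T : finType) (A : T -> I -> Prop) :
  (forall t, U (A t)) -> U (fun i => forall t, A t i).
Proof.
move=> hA; suff: U (fun i => forall t, t \in enum T -> A t i).
  by move=> h; apply: uf_up h _ => i h t; apply: h; rewrite mem_enum.
elim: (enum T) => [|t s IH]; first exact: ultra_all.
by refine (ultra_and2 (hA t) IH _) => i At As u; rewrite inE => /predU1P [->|/As].
Qed.

Lemma hbounded_cst (z : CC) : hbounded U (fun _ => z).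
Proof. by exists (cabs z); apply: ultra_all. Qed.

Lemma is_st_eq (x y : I -> CC) c :
  U (fun i => x i = y i) -> is_st U x c -> is_st U y c.
Proof. by move=> hxy hx e e0; refine (ultra_and2 hxy (hx e e0) _) => i ->. Qed.

Lemma is_st_cst c : is_st U (fun _ => c) c.
Proof. by move=> e e0; apply: ultra_all => i; rewrite subrr cabs0. Qed.

Lemma is_st_add x y c d : is_st U x c -> is_st U y d ->
  is_st U (fun i => x i + y i) (c + d).
Proof.
move=> hx hy e e0; have e2 : 0 < e / 2 by lra.
refine (ultra_and2 (hx _ e2) (hy _ e2) _) => i h1 h2.
rewrite opprD addrACA; apply: le_lt_trans (cabsD _ _) _; lra.
Qed.

Lemma is_st_opp x c : is_st U x c -> is_st U (fun i => - x i) (- c).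
Proof. by move=> hx e e0; apply: uf_up (hx e e0) _ => i; rewrite -opprD cabsN. Qed.

Lemma is_st_sub x y c d : is_st U x c -> is_st U y d ->
  is_st U (fun i => x i - y i) (c - d).
Proof. by move=> hx hy; apply: is_st_add hx (is_st_opp hy). Qed.

Lemma is_st_mul x y c d : is_st U x c -> is_st U y d ->
  is_st U (fun i => x i * y i) (c * d).
Proof.
move=> hx hy e e0.
set K := 1 + cabs c + cabs d.
have K0 : 0 < K by rewrite /K; have := cabs_ge0 c; have := cabs_ge0 d; lra.
set r := Num.min 1 (e / (2 * K)).
have r0 : 0 < r by rewrite lt_min ltr01 /= divr_gt0 // mulr_gt0.
have r1 : r <= 1 by rewrite ge_min lexx.
have rK : r * K <= e / 2.
  have : r <= e / (2 * K) by rewrite ge_min lexx orbT.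
  by rewrite ler_pdivlMr ?mulr_gt0 //; lra.
refine (ultra_and2 (hx _ r0) (hy _ r0) _) => i h1 h2.
have -> : x i * y i - c * d = (x i - c) * (y i - d) + c * (y i - d) + d * (x i - c) by ring.
apply: le_lt_trans (cabsD _ _) _; apply: le_lt_trans (lerD (cabsD _ _) (lexx _)) _.
rewrite !cabsM /K in rK *; have := cabs_ge0 c; have := cabs_ge0 d.
have := cabs_ge0 (x i - c); have := cabs_ge0 (y i - d); nra.
Qed.

Lemma is_st_sum m (x : 'I_m -> I -> CC) c : (forall k, is_st U (x k) (c k)) ->
  is_st U (fun i => \sum_(k < m) x k i) (\sum_(k < m) c k).
Proof.
elim: m x c => [|m IH] x c h.
  rewrite big_ord0; apply: is_st_eq (is_st_cst 0).
  by apply: ultra_all => i; rewrite big_ord0.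
apply: (@is_st_eq (fun i => \sum_(k < m) x (widen_ord (leqnSn m) k) i + x ord_max i)).
  by apply: ultra_all => i; rewrite big_ord_recr.
by rewrite big_ord_recr; apply: is_st_add; [apply: IH => k|]; apply: h.
Qed.

(* The standard part is the supremum of the t lying U-almost surely below y. *)
Lemma real_st_exists (y : I -> RR) (r : RR) : U (fun i => `|y i| <= r) ->
  exists s : RR, forall e : RR, 0 < e -> U (fun i => `|y i - s| < e).
Proof.
move=> hb; pose E (t : RR) := U (fun i => t <= y i).
have bE : bound E.
  exists r => t Et; apply/RleP; rewrite leNgt; apply/negP => rt.
  have [i [h1 h2]] := ultra_witness (uf_inter Et hb).
  by have := ler_norm (y i); lra.
have nE : exists t, E t.
  by exists (- r); apply: uf_up hb _ => i; rewrite ler_norml => /andP [].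
have [s [ub lub]] := @completeness E bE nE.
exists s => e e0.
have below : U (fun i => s - e < y i).
  apply: NNPP => hn; suff : s <= s - e by lra.
  apply/RleP; apply: lub => t Et; apply/RleP; rewrite leNgt; apply/negP => lt.
  by apply: hn; apply: uf_up Et _ => i ti; lra.
have above : U (fun i => y i < s + e / 2).
  case: (uf_ultra U (fun i => s + e / 2 <= y i)) => h.
    by have /RleP := ub _ h; lra.
  by apply: uf_up h _ => i; rewrite ltNge => /negP.
by refine (ultra_and2 below above _) => i h1 h2; rewrite ltr_distl; apply/andP; split; lra.
Qed.

Lemma is_st_exists (x : I -> CC) : hbounded U x -> exists c, is_st U x c.
Proof.
move=> [r hr].
have [s1 h1] := @real_st_exists (fun i => complex.Re (x i)) r
  (uf_up hr (fun i => le_trans (normr_Re_le_cabs _))).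
have [s2 h2] := @real_st_exists (fun i => complex.Im (x i)) r
  (uf_up hr (fun i => le_trans (normr_Im_le_cabs _))).
exists (s1 +i* s2) => e e0; have e2 : 0 < e / 2 by lra.
refine (ultra_and2 (h1 _ e2) (h2 _ e2) _) => i g1 g2.
by case E : (x i) => [u v]; rewrite E /= in g1 g2; apply: le_lt_trans (cabs_ReIm _ _) _; lra.
Qed.

End Ultrafilter.

Lemma exists_least_not (P : nat -> Prop) : (exists k, ~ P k) ->
  exists m, ~ P m /\ forall j, (j < m)%N -> P j.
Proof.
case=> k; elim: k {-2}k (leqnn k) => [|K IH] k hk nPk.
  by exists k; split => // j; move: hk; rewrite leqn0 => /eqP ->.
case: (classic (exists j, (j < k)%N /\ ~ P j)) => [[j [jk nPj]]|h].
  by apply: (IH j) => //; rewrite -ltnS; apply: leq_trans hk.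
by exists k; split => // j jk; apply: NNPP => nPj; apply: h; exists j.
Qed.

Section Overspill.
Variables (I : Type) (U : ultrafilter I).
Hypothesis incomplete : countably_incomplete U.

(* N i is the predecessor of the first k at which A k or B k fails at i,
   where the A k have empty intersection: it exists by incompleteness, and it
   is infinite since all the A k and B k are U-large. *)
Lemma overspill (B : nat -> I -> Prop) : (forall k, U (B k)) ->
  exists N : I -> nat, (forall k, U (fun i => (k <= N i)%N)) /\
                       (forall i, (0 < N i)%N -> B (N i) i).
Proof.
move=> hB; case: incomplete => [A [hA hAi]].
pose C k i := forall j, (j <= k)%N -> A j i /\ B j i.
have hC k : U (C k).
  elim: k => [|k IH].
    by refine (ultra_and2 (hA 0%N) (hB 0%N) _) => i h1 h2 j; rewrite leqn0 => /eqP ->.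
  refine (ultra_and2 IH (uf_inter (hA k.+1) (hB k.+1)) _) => i h1 h2 j.
  by rewrite leq_eqVlt ltnS => /orP [/eqP ->|/h1].
have ex i : exists m, ~ C m i /\ forall j, (j < m)%N -> C j i.
  by apply: exists_least_not; have [k nA] := hAi i; exists k => /(_ k (leqnn k)) [].
have [m hm] := choice_fun ex.
exists (fun i => (m i).-1); split => [k|i].
  apply: uf_up (hC k) _ => i Cki; case: (hm i) => nC _.
  have : ~ (m i <= k)%N by move=> mk; apply: nC => j jm; apply: Cki (leq_trans jm mk).
  lia.
case: (hm i) => _; case: (m i) => [|p] //= hp _.
by case: (hp p (ltnSn p) p (leqnn p)).
Qed.

Lemma overspill_inv_small (N : I -> nat) : (forall k, U (fun i => (k <= N i)%N)) ->
  forall eps : RR, 0 < eps -> U (fun i => ((N i).+1%:R : RR)^-1 < eps).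
Proof.
move=> hN eps e0.
have hK : eps^-1 < (Num.Def.archi_bound eps^-1)%:R.
  by apply: archi_boundP; rewrite invr_ge0 ltW.
apply: uf_up (hN (Num.Def.archi_bound eps^-1)) _ => i hi.
rewrite invf_plt ?posrE ?ltr0n //; apply: lt_le_trans hK _.
by rewrite ler_nat; apply: leq_trans hi _.
Qed.

Lemma hbounded_nat (x : I -> CC) : hbounded U x ->
  exists K : nat, U (fun i => cabs (x i) <= K%:R).
Proof.
move=> [r hr]; exists (Num.Def.archi_bound `|r|); apply: uf_up hr _ => i h.
apply: (le_trans h); apply: (le_trans (ler_norm r)); apply: ltW.
exact: archi_boundP (normr_ge0 r).
Qed.

Lemma hbounded_fin (T : finType) (x : T -> I -> CC) : (forall t, hbounded U (x t)) ->
  exists K : nat, U (fun i => forall t, cabs (x t i) <= K%:R).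
Proof.
move=> hx; have [K hK] := choice_fun (fun t => hbounded_nat (hx t)).
exists (\max_t K t)%N; apply: uf_up (ultra_forall_fin hK) _ => i h t.
by apply: (le_trans (h t)); rewrite ler_nat; apply: leq_bigmax.
Qed.

Lemma uniform_bound (T : Type) (t0 : T) (S : I -> T -> Prop) (F : I -> T -> CC) :
  (forall t : I -> T, U (fun i => S i (t i)) -> hbounded U (fun i => F i (t i))) ->
  exists M : RR, U (fun i => forall t, S i t -> cabs (F i t) <= M).
Proof.
move=> hF; apply: NNPP => hn.
pose B k i := exists t, S i t /\ k%:R < cabs (F i t).
have hB k : U (B k).
  case: (uf_ultra U (B k)) => // nB; case: hn; exists k%:R.
  apply: uf_up nB _ => i nBi t St; rewrite leNgt; apply/negP => lt.
  by apply: nBi; exists t.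
have [N [hN hNB]] := overspill hB.
have ex i : exists t, (0 < N i)%N -> S i t /\ (N i)%:R < cabs (F i t).
  case: (posnP (N i)) => [->|/hNB [t ht]]; first by exists t0.
  by exists t.
have [t ht] := choice_fun ex.
have [K hK] := hbounded_nat (hF t (uf_up (hN 1%N) (fun i hi => (ht i hi).1))).
have [i [hKi hNi]] := ultra_witness (uf_inter hK (hN K.+1)).
have := lt_le_trans (ht i (leq_ltn_trans (leq0n K) hNi)).2 hKi.
by rewrite ltr_nat ltnNge (ltnW hNi).
Qed.

End Overspill.

Section PrimitiveRootSums.
Variables (R : idomainType) (N : nat) (z : R).
Hypothesis prim_z : N.-primitive_root z.

Lemma prim_root_sum_expr e : ~~ (N %| e)%N -> \sum_(j < N) (z ^+ e) ^+ j = 0.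
Proof.
move=> Ne; have := subrX1 (z ^+ e) N.
rewrite -exprM mulnC exprM (prim_expr_order prim_z) expr1n subrr => /esym/eqP.
by rewrite mulf_eq0 subr_eq0 -(prim_order_dvd prim_z) (negbTE Ne) => /eqP.
Qed.

Lemma coef_prim_root_sum (p : {poly R}) l : (size p <= N)%N -> (l < N)%N ->
  N%:R * p`_l = \sum_(j < N) p.[z ^+ j] * z ^+ (j * (N - l)).
Proof.
move=> sp lN.
have -> : \sum_(j < N) p.[z ^+ j] * z ^+ (j * (N - l)) =
          \sum_(m < N) p`_m * \sum_(j < N) (z ^+ (m + (N - l))) ^+ j.
  under [RHS]eq_bigr do rewrite mulr_sumr.
  rewrite exchange_big /=; apply: eq_bigr => j _.
  rewrite (horner_coef_wide _ sp) mulr_suml; apply: eq_bigr => m _.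
  by rewrite -mulrA -!exprM -exprD; congr (_ * z ^+ _); lia.
rewrite (bigD1 (Ordinal lN)) //= [X in _ + X]big1 ?addr0 => [|m ml]; last first.
  rewrite prim_root_sum_expr ?mulr0 //; apply/negP => /dvdnP [q hq].
  have : m <> l :> nat by move=> e; move: ml; rewrite -val_eqE /= e eqxx.
  have := ltn_ord m; case: q hq => [|[|q]] hq; lia.
rewrite subnKC ?(ltnW lN) // (prim_expr_order prim_z).
by under eq_bigr do rewrite expr1n; rewrite sumr_const card_ord mulr_natl mulr_natr.
Qed.

End PrimitiveRootSums.

Lemma sum_expr_le2 (R : realFieldType) (s : R) K : 0 <= s -> s <= 1 / 2 ->
  \sum_(m < K) s ^+ m <= 2.
Proof.
move=> s0 s1; suff : \sum_(m < K) s ^+ m <= 2 - 2 * s ^+ K by have := exprn_ge0 K s0; lra.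
elim: K => [|K IH]; first by rewrite big_ord0 expr0; lra.
by rewrite big_ord_recr /= exprS; have := exprn_ge0 K s0; nra.
Qed.

Definition dyadic_root (k : nat) : CC := iter k sqrtC (-1).

Lemma dyadic_root_expr_half k : dyadic_root k ^+ (2 ^ k) = -1.
Proof. by elim: k => [|k IH] /=; rewrite ?expr1 // expnS exprM sqrtCK. Qed.

Lemma prim_root_dyadic k : (2 ^ k.+1).-primitive_root (dyadic_root k).
Proof.
have w1 : dyadic_root k ^+ (2 ^ k.+1) = 1.
  by rewrite expnS mulnC exprM dyadic_root_expr_half expr2 mulrNN mulr1.
have [m prim_m /(dvdn_pfactor _ _ (pdiv_prime (ltnSn 1)))] :=
  prim_order_exists (expn_gt0 2 k.+1) w1.
case=> j; rewrite leq_eqVlt => /orP [/eqP -> <- //|jk] mE.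
have : (m %| 2 ^ k)%N by rewrite mE dvdn_exp2l // -ltnS.
rewrite (prim_order_dvd prim_m) dyadic_root_expr_half.
by rewrite lt_eqF // (lt_trans (ltrN10 _) ltr01).
Qed.

Lemma cabs_dyadic_root_expr k j : cabs (dyadic_root k ^+ j) = 1.
Proof.
rewrite cabsX; suff -> : cabs (dyadic_root k) = 1 by rewrite expr1n.
apply/eqP; rewrite -(@pexpr_eq1 _ _ (2 ^ k.+1)) ?expn_gt0 ?cabs_ge0 //.
by rewrite -cabsX (prim_expr_order (prim_root_dyadic k)) cabs1.
Qed.

Section CauchyEstimates.
Variables (p : {poly CC}) (M : RR).
Hypothesis p_le : forall z, cabs z <= 1 -> cabs p.[z] <= M.

Let M_ge0 : 0 <= M.
Proof. by apply: le_trans (cabs_ge0 _) (p_le (z := 0) _); rewrite cabs0 ler01. Qed.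

Lemma cabs_coef_le l : cabs p`_l <= M.
Proof.
set k := size p; set N := (2 ^ k.+1)%N; have prim_w := prim_root_dyadic k.
have sp : (size p <= N)%N by apply: leq_trans (leqnSn k) (ltnW (ltn_expl _ (ltnSn 1))).
have [lN|Nl] := ltnP l N; last by rewrite nth_default ?cabs0 //; apply: leq_trans sp Nl.
suff : N%:R * cabs p`_l <= N%:R * M by rewrite ler_pM2l // ltr0n expn_gt0.
rewrite -cabs_nat -cabsM (coef_prim_root_sum prim_w sp lN).
apply: le_trans (cabs_sum _) _; rewrite cabs_nat mulr_natl -[N in M *+ N]card_ord -sumr_const.
apply: ler_sum => j _; rewrite cabsM cabs_dyadic_root_expr mulr1.
by apply: p_le; rewrite cabs_dyadic_root_expr.
Qed.

Lemma cabs_horner_sub0_le t : cabs t <= 1 / 2 -> cabs (p.[t] - p.[0]) <= 2 * M * cabs t.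
Proof.
move=> t_le; have t_ge0 := cabs_ge0 t.
rewrite horner_coef0 horner_coef; case sp : (size p) => [|K].
  by rewrite big_ord0 nth_default ?sp // subr0 cabs0; have := mulr_ge0 M_ge0 t_ge0; lra.
rewrite big_ord_recl /= expr0 mulr1 addrC addKr.
apply: le_trans (cabs_sum _) _.
apply: (@le_trans _ _ (\sum_(m < K) M * cabs t * cabs t ^+ m)).
  apply: ler_sum => m _; rewrite cabsM cabsX exprS mulrA.
  by apply: ler_wpM2r; [exact: exprn_ge0|apply: ler_wpM2r => //; apply: cabs_coef_le].
rewrite -mulr_sumr; have := sum_expr_le2 K t_ge0 t_le.
have := mulr_ge0 M_ge0 t_ge0; nra.
Qed.

End CauchyEstimates.

Definition line_poly n (D : {mpoly CC[n]}) (c u : 'I_n -> CC) : {poly CC} :=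
  mmap (@polyC CC) (fun j => (c j)%:P + (u j)%:P * 'X) D.

Lemma line_polyE n (D : {mpoly CC[n]}) c u t :
  (line_poly D c u).[t] = meval (fun j => c j + u j * t) D.
Proof.
rewrite /line_poly /mmap mevalE horner_sum; apply: eq_bigr => m _.
rewrite hornerCM /mmap1 horner_prod; congr (_ * _); apply: eq_bigr => j _.
by rewrite horner_exp hornerD hornerC hornerCM hornerX.
Qed.

Lemma exists_unit_direction n (x c : 'I_n -> CC) : exists v : 'I_n -> CC,
  (forall j, cabs (v j) <= 1) /\
  forall j, x j = c j + v j * (\sum_k cabs (x k - c k))%:C.
Proof.
set r := \sum_k _; have r_ge0 : 0 <= r by apply: sumr_ge0 => k _; apply: cabs_ge0.
have le_r j : cabs (x j - c j) <= r.
  by rewrite /r (bigD1 j) //= lerDl; apply: sumr_ge0 => k _; apply: cabs_ge0.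
have [r0|r_neq0] := eqVneq r 0.
  exists (fun _ => 0); split => [j|j]; first by rewrite cabs0 ler01.
  rewrite mul0r addr0; apply/eqP; rewrite -subr_eq0; apply/eqP; apply: cabs_eq0.
  by apply/eqP; rewrite eq_le cabs_ge0 -r0 le_r.
have rC_neq0 : r%:C != 0 by apply: contra_neq r_neq0 => /complexI.
exists (fun j => (x j - c j) / r%:C); split => j; last by rewrite divfK // addrC subrK.
rewrite cabsM cabsV cabs_real ger0_norm // ler_pdivrMr ?mul1r //.
by rewrite lt_def r_neq0 r_ge0.
Qed.

Section SContinuity.
Variables (I : Type) (U : ultrafilter I) (n : nat).
Hypothesis incomplete : countably_incomplete U.

Lemma bCX_line_bounded (D : ipoly I n) (c : 'I_n -> CC) (v : I -> 'I_n -> CC) :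
  bCX U D -> (forall i j, cabs (v i j) <= 1) ->
  exists M : RR, U (fun i => forall t, cabs t <= 1 ->
     cabs (meval (fun j => c j + v i j * t) (D i)) <= M).
Proof.
move=> hD hv; apply: (uniform_bound incomplete 0) => t ht.
apply: hD => j; exists (cabs (c j) + 1); refine (uf_up ht _) => i hi /=.
apply: le_trans (cabsD _ _) _; rewrite lerD2l cabsM.
by have := cabs_ge0 (v i j); have := cabs_ge0 (t i); have := hv i j; nra.
Qed.

(* Restrict D to the complex line through c and x: there it is uniformly
   bounded on the unit disc, so the Cauchy estimates apply. *)
Lemma bCX_S_continuous (D : ipoly I n) (x : 'I_n -> I -> CC) (c : 'I_n -> CC) :
  bCX U D -> (forall j, is_st U (x j) (c j)) ->
  is_st U (fun i => ieval D x i - meval c (D i)) 0.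
Proof.
move=> hD hx.
pose rho i := \sum_k cabs (x k i - c k).
have [v hv] := choice_fun (fun i => exists_unit_direction (fun j => x j i) c).
have [M hM] := bCX_line_bounded c hD (fun i => (hv i).1).
have rho_small : is_st U (fun i => (rho i)%:C) 0.
  have term_small k : is_st U (fun i => (cabs (x k i - c k))%:C) 0.
    move=> e e0; refine (uf_up (hx k e e0) _) => i.
    by rewrite subr0 cabs_real ger0_norm ?cabs_ge0.
  have := is_st_sum term_small; rewrite big1_eq; apply: is_st_eq.
  by apply: ultra_all => i; rewrite /rho rmorph_sum.
move=> eps e0.
set M1 := `|M| + 1; have M1_gt0 : 0 < M1 by rewrite /M1; have := normr_ge0 M; lra.
set d := Num.min (1 / 2) (eps / (2 * M1)).
have d_gt0 : 0 < d by rewrite lt_min; apply/andP; split; [lra|apply: divr_gt0 => //; lra].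
have d_le : d <= 1 / 2 by rewrite ge_min lexx.
have dM1 : d * (2 * M1) <= eps.
  have : d <= eps / (2 * M1) by rewrite ge_min lexx orbT.
  by rewrite ler_pdivlMr //; lra.
refine (ultra_and2 (rho_small d d_gt0) hM _) => i hr hMi.
have rho_ge0 : 0 <= rho i by apply: sumr_ge0 => k _; apply: cabs_ge0.
rewrite subr0 cabs_real ger0_norm // in hr.
pose p := line_poly (D i) c (v i).
have -> : ieval D x i = p.[(rho i)%:C].
  by rewrite line_polyE; apply: meval_eq => j; rewrite -(hv i).2.
have -> : meval c (D i) = p.[0].
  by rewrite line_polyE; apply: meval_eq => j; rewrite mulr0 addr0.
rewrite subr0; apply: le_lt_trans (cabs_horner_sub0_le (M := M1) _ _) _.
- move=> z z1; rewrite line_polyE; apply: le_trans (hMi z z1) _.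
  by rewrite /M1; have := ler_norm M; lra.
- by rewrite cabs_real ger0_norm //; lra.
- by rewrite cabs_real ger0_norm //; nra.
Qed.

(* A point of the polydisc where D is not small has a standard part c, and
   D there is infinitely close to D(c), hence to st(D)(c) = 0. *)
Lemma st_of0_small_on_polydisc (D : ipoly I n) :
  bCX U D -> st_of U D (fun _ => 0) ->
  forall (r eps : RR), 0 < eps -> U (fun i => forall z : 'I_n -> CC,
    (forall j, cabs (z j) <= r) -> cabs (meval z (D i)) <= eps).
Proof.
move=> hD hst r eps e0.
set small := fun i => forall z : 'I_n -> CC,
  (forall j, cabs (z j) <= r) -> cabs (meval z (D i)) <= eps.
case: (uf_ultra U small) => // hbig; exfalso.
have ex i : exists z : 'I_n -> CC, ~ small i ->
    (forall j, cabs (z j) <= r) /\ eps < cabs (meval z (D i)).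
  case: (classic (small i)) => [si|nsmall]; first by exists (fun _ => 0) => /(_ si).
  have [z hz] := not_all_ex_not _ _ nsmall; have [zr zD] := imply_to_and _ _ hz.
  by exists z => _; split => //; rewrite ltNge; apply/negP.
have [z hz] := choice_fun ex.
pose x j i := z i j.
have hxb j : hbounded U (x j) by exists r; refine (uf_up hbig _) => i /hz [+ _]; apply.
have [c hc] := choice_fun (fun j => is_st_exists (hxb j)).
have near0 := is_st_add (bCX_S_continuous hD hc) (hst c).
have [i [hi /hz [_ hzi]]] := ultra_witness (uf_inter (near0 eps e0) hbig).
by move: hi; rewrite addr0 subrK subr0 => /(lt_trans hzi); rewrite ltxx.
Qed.

End SContinuity.

Definition infinitesimal I (U : ultrafilter I) n (P : ipoly I n) : Prop :=
  bCX U P /\ st_of U P (fun _ => 0).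

Section InternalPolynomials.
Variables (I : Type) (U : ultrafilter I) (n : nat).

Lemma bCX_sub (P Q : ipoly I n) : bCX U P -> bCX U Q -> bCX U (isub P Q).
Proof.
move=> hP hQ x hx; have [r1 h1] := hP x hx; have [r2 h2] := hQ x hx.
exists (r1 + r2); refine (ultra_and2 h1 h2 _) => i g1 g2.
by rewrite /ieval /isub mevalB; apply: le_trans (cabsD _ _) _; rewrite cabsN; lra.
Qed.

Lemma st_of_sub (P Q : ipoly I n) f g : st_of U P f -> st_of U Q g ->
  st_of U (isub P Q) (fun z => f z - g z).
Proof.
move=> hP hQ z; apply: (is_st_eq (x := fun i => meval z (P i) - meval z (Q i))).
  by apply: ultra_all => i; rewrite /isub mevalB.
exact: is_st_sub.
Qed.

Hypothesis incomplete : countably_incomplete U.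

Lemma infinitesimal_factor (D : ipoly I n) : infinitesimal U D ->
  exists Q R, [/\ infinitesimal U Q, infinitesimal U R & D = imul Q R].
Proof.
move=> [hD stD].
have small k : U (fun i => forall z : 'I_n -> CC,
    (forall j, cabs (z j) <= k%:R) -> cabs (meval z (D i)) <= ((k.+1%:R : RR) ^+ 2)^-1).
  by apply: st_of0_small_on_polydisc; rewrite // invr_gt0 exprn_gt0 ?ltr0Sn.
have [N [hN hND]] := overspill incomplete small.
pose Q : ipoly I n := fun i => ((N i).+1%:R^-1)%:MP.
pose R : ipoly I n := fun i => (N i).+1%:R *: D i.
have R_small (K : nat) : U (fun i => forall z : 'I_n -> CC,
    (forall j, cabs (z j) <= K%:R) -> cabs (meval z (R i)) <= ((N i).+1%:R)^-1).
  refine (uf_up (hN K.+1) _) => i hi z hz.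
  have Ni_gt0 : 0 < (N i).+1%:R :> RR by rewrite ltr0Sn.
  have hDz : cabs (meval z (D i)) <= ((N i).+1%:R ^+ 2)^-1.
    apply: (hND i (leq_ltn_trans (leq0n K) hi) z) => j.
    by apply: le_trans (hz j) _; rewrite ler_nat ltnW.
  rewrite /R mevalZ cabsM cabs_nat; apply: le_trans (ler_wpM2l (ltW Ni_gt0) hDz) _.
  by rewrite expr2 invfM mulrA mulfV ?gt_eqF // mul1r.
have inv_le1 i : ((N i).+1%:R : RR)^-1 <= 1 by rewrite invf_le1 ?ltr0n // ler1n.
exists Q, R; split.
- split => [x _|z eps e0].
    by exists 1; apply: ultra_all => i; rewrite /ieval mevalC cabsV cabs_nat inv_le1.
  refine (uf_up (overspill_inv_small hN e0) _) => i.
  by rewrite mevalC subr0 cabsV cabs_nat.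
- split => [x hx|z eps e0].
    have [K hK] := hbounded_fin hx; exists 1.
    refine (ultra_and2 hK (R_small K) _) => i h1 h2.
    exact: le_trans (h2 _ h1) (inv_le1 i).
  have [K hK] := hbounded_fin (x := fun j (_ : I) => z j) (fun j => hbounded_cst U (z j)).
  refine (ultra_and2 (uf_inter hK (R_small K)) (overspill_inv_small hN e0) _) => i [h1 h2].
  by rewrite subr0; apply: le_lt_trans (h2 z h1).
- apply: functional_extensionality => i.
  by rewrite /imul /Q /R mul_mpolyC scalerA mulVf ?scale1r ?pnatr_eq0.
Qed.

End InternalPolynomials.

Section Ideal.
Variables (I : Type) (U : ultrafilter I) (n : nat) (a : ipoly I n -> Prop).
Hypothesis a_ideal : is_ideal U a.

Lemma ideal_isum m (F : 'I_m -> ipoly I n) : (forall k, a (F k)) -> a (isum F).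
Proof.
case: a_ideal => _ _ a0 aD _; elim: m F => [|m IH] F aF.
  suff -> : isum F = @izero I n by [].
  by apply: functional_extensionality => i; rewrite /isum big_ord0.
suff -> : isum F = iadd (isum (fun k => F (widen_ord (leqnSn m) k))) (F ord_max).
  by apply: aD; [apply: IH => k|]; apply: aF.
by apply: functional_extensionality => i; rewrite /isum /iadd big_ord_recr.
Qed.

Lemma st_set_co_closure f : st_set U a f -> co_closure (st_set U a) f.
Proof. by move=> af r eps e0; exists f; split => // z _; rewrite subrr cabs0 ltW. Qed.

Lemma infinitesimal_Inf P : infinitesimal U P -> Inf U a P.
Proof.
case: a_ideal => _ _ a0 _ _ [hP stP]; split => //; exists (fun _ => 0); split => //.
apply: st_set_co_closure; exists (@izero I n); split => // z.
by apply: is_st_eq (is_st_cst U 0); apply: ultra_all => i; rewrite /izero meval0.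
Qed.

Hypothesis a_saturated : saturated U a.

Lemma Inf_Inf2 P : countably_incomplete U -> Inf U a P -> Inf2 U a P.
Proof.
move=> incomplete [hP [f [stP f_cl]]].
have [B [aB stB]] := a_saturated f_cl.
have hB : bCX U B by case: a_ideal => + _ _ _ _; apply.
have D_inf : infinitesimal U (isub P B).
  by split; [apply: bCX_sub | move=> z; have := st_of_sub stP stB z; rewrite subrr].
have [Q [R [Q_inf R_inf DE]]] := infinitesimal_factor incomplete D_inf.
split => //; exists 1%N, (fun _ => Q), (fun _ => R).
split; first by move=> _; split; apply: infinitesimal_Inf.
suff -> : isub P (isum (fun _ : 'I_1 => imul Q R)) = B by [].
apply: functional_extensionality => i; move/(congr1 (fun D => D i)): DE.
by rewrite /isub /isum /imul big_ord1 => <-; rewrite opprB addrC subrK.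
Qed.

Lemma Inf2_Inf P : Inf2 U a P -> Inf U a P.
Proof.
move=> [hP [m [Q [R [QR_Inf aA]]]]]; set A := isub P _ in aA.
case: (a_ideal) => a_bCX _ _ aD aM.
have [e st_Q] : exists e, forall k, st_of U (Q k) (e k).
  apply: (choice_fun (P := fun k f => st_of U (Q k) f)) => k.
  by case: (QR_Inf k) => [[_ [e [he _]]] _]; exists e.
have [fB st_R] : exists fB : 'I_m -> (('I_n -> CC) -> CC) * ipoly I n, forall k,
    [/\ st_of U (R k) (fB k).1, a (fB k).2 & st_of U (fB k).2 (fB k).1].
  apply: (choice_fun (P := fun k fB => [/\ st_of U (R k) fB.1, a fB.2 & st_of U fB.2 fB.1])).
  move=> k; case: (QR_Inf k) => _ [_ [f [hf f_cl]]].
  by have [B [aB stB]] := a_saturated f_cl; exists (f, B).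
have [g st_A] : exists g, st_of U A g.
  apply: (choice_fun (P := fun z c => is_st U (fun i => meval z (A i)) c)) => z.
  apply: is_st_exists.
  exact: (a_bCX _ aA (fun j _ => z j) (fun j => hbounded_cst U (z j))).
pose h z := g z + \sum_(k < m) e k z * (fB k).1 z.
have st_h (S : 'I_m -> ipoly I n) : (forall k, st_of U (S k) (fB k).1) ->
    st_of U (iadd A (isum (fun k => imul (Q k) (S k)))) h.
  move=> st_S z.
  apply: (is_st_eq (x := fun i => meval z (A i) +
                        \sum_(k < m) meval z (Q k i) * meval z (S k i))).
    apply: ultra_all => i; rewrite /iadd /isum [in RHS]mevalD [in RHS]raddf_sum.
    by congr (_ + _); apply: eq_bigr => k _; rewrite /= /imul mevalM.
  apply: is_st_add (st_A z) _.
  apply: (is_st_sum (x := fun k i => meval z (Q k i) * meval z (S k i))) => k.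
  by apply: is_st_mul; [apply: st_Q | apply: st_S].
split => //; exists h; split.
  suff <- : iadd A (isum (fun k => imul (Q k) (R k))) = P.
    by apply: st_h => k; case: (st_R k).
  by apply: functional_extensionality => i; rewrite /iadd /A /isub subrK.
apply: st_set_co_closure; exists (iadd A (isum (fun k => imul (Q k) (fB k).2))).
split; last by apply: st_h => k; case: (st_R k).
apply: aD => //; apply: ideal_isum => k; apply: aM; last by case: (st_R k).
by case: (QR_Inf k) => [[]].
Qed.

End Ideal.

Theorem lemma6p4 (I : Type) (U : ultrafilter I) (n : nat)
  (a : ipoly I n -> Prop) :
  countably_incomplete U ->
  is_ideal U a ->
  saturated U a ->
  forall P : ipoly I n, Inf U a P <-> Inf2 U a P.
Proof.
move=> incomplete a_ideal a_saturated P.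
by split; [apply: Inf_Inf2 | apply: Inf2_Inf].
Qed.
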